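(* Let $(M,g)$ be a pseudo-Riemannian manifold with Levi-Civita connection $\nabla^{g}$, let $J$ be a $g$-symmetric $(1,1)$-tensor field with $J^2=pJ+qI$, $p,q\in\mathbb{R}$, $p^2+4q>0$, and let $\nabla$ be a linear connection on $M$. Then the distributions $\mathcal{D}$ and $\mathcal{D}'$ are $\tilde{\nabla}$-geodesically invariant, $\bar{\nabla}$-geodesically invariant and $\tilde{\tilde{\nabla}}$-geodesically invariant.
   Context: $\sigma_{\pm}:=\frac{p\pm\sqrt{p^2+4q}}{2}$, $\mathcal{P}:=\frac{1}{\sqrt{p^2+4q}}(-J+\sigma_{+}I)$, $\mathcal{P}':=\frac{1}{\sqrt{p^2+4q}}(J-\sigma_{-}I)$, $\mathcal{D}:=\ker\mathcal{P}'$, $\mathcal{D}':=\ker\mathcal{P}$. For a linear connection $D$, a distribution $\mathcal{E}$ is $D$-geodesically invariant if $X,Y\in\Gamma(\mathcal{E})$ implies $D_XY+D_YX\in\Gamma(\mathcal{E})$. The Schouten-van Kampen connection of $\nabla$ is $\tilde{\nabla}_XY:=\mathcal{P}(\nabla_X\mathcal{P}Y)+\mathcal{P}'(\nabla_X\mathcal{P}'Y)$; the Vrănceanu connection of $\nabla$ is $\bar{\nabla}_XY:=\tilde{\nabla}_{\mathcal{P}X}Y+\mathcal{P}([\mathcal{P}'X,\mathcal{P}Y])+\mathcal{P}'([\mathcal{P}X,\mathcal{P}'Y])$; the Vidal connection is $\tilde{\tilde{\nabla}}_XY:=\nabla^g_XY+\frac{1}{p^2+4q}[2J((\nabla^g_XJ)Y)-p(\nabla^g_XJ)Y+J((\nabla^g_YJ)X)+(\nabla^g_{JY}J)X-p(\nabla^g_YJ)X]$.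 *)

(* Algebraic model of the geometric data:
   A  = ring of smooth real functions C^oo(M) (an R-algebra),
   V  = module of vector fields Gamma(TM) over A,
   der X f = X(f) (action of vector fields on functions),
   br X Y  = Lie bracket [X,Y],
   g       = the metric, C^oo-bilinear form V x V -> A. *)
From HB Require Import structures.
From mathcomp Require Import all_boot all_order all_algebra.
From mathcomp Require Import reals.
Set Implicit Arguments. Unset Strict Implicit. Unset Printing Implicit Defensive.
Import Order.TTheory GRing.Theory Num.Theory.
Local Open Scope ring_scope.

Section Geo.
Variables (R : realType) (A : comAlgType R) (V : lmodType A).

Record vector_field_structure (der : V -> A -> A) (br : V -> V -> V) : Prop := {
  der_addX : forall X X' f, der (X + X') f = der X f + der X' f;
  der_scaleX : forall (h : A) X f, der (h *: X) f = h * der X f;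
  der_addf : forall X f h, der X (f + h) = der X f + der X h;
  der_mulf : forall X f h, der X (f * h) = der X f * h + f * der X h;
  der_const : forall X (r : R), der X (r%:A) = 0;
  br_addl : forall X X' Y, br (X + X') Y = br X Y + br X' Y;
  br_anti : forall X Y, br X Y = - br Y X;
  br_leibniz : forall X Y (f : A), br X (f *: Y) = f *: br X Y + der X f *: Y;
  br_jacobi : forall X Y Z, br X (br Y Z) + br Y (br Z X) + br Z (br X Y) = 0;
  br_der : forall X Y f, der (br X Y) f = der X (der Y f) - der Y (der X f) }.

Record linear_connection (der : V -> A -> A) (nabla : V -> V -> V) : Prop := {
  nabla_addX : forall X X' Y, nabla (X + X') Y = nabla X Y + nabla X' Y;
  nabla_scaleX : forall (f : A) X Y, nabla (f *: X) Y = f *: nabla X Y;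
  nabla_addY : forall X Y Y', nabla X (Y + Y') = nabla X Y + nabla X Y';
  nabla_leibniz : forall X (f : A) Y, nabla X (f *: Y) = f *: nabla X Y + der X f *: Y }.

Record pseudo_metric (g : V -> V -> A) : Prop := {
  g_sym : forall X Y, g X Y = g Y X;
  g_addl : forall X X' Y, g (X + X') Y = g X Y + g X' Y;
  g_scalel : forall (f : A) X Y, g (f *: X) Y = f * g X Y;
  g_nondeg : forall X, (forall Y, g X Y = 0) -> X = 0 }.

Record levi_civita (der : V -> A -> A) (br : V -> V -> V) (g : V -> V -> A)
    (nablag : V -> V -> V) : Prop := {
  lc_conn : linear_connection der nablag;
  lc_torsion_free : forall X Y, nablag X Y - nablag Y X = br X Y;
  lc_metric : forall X Y Z, der X (g Y Z) = g (nablag X Y) Z + g Y (nablag X Z) }.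

Record tensor11 (J : V -> V) : Prop := {
  J_add : forall X Y, J (X + Y) = J X + J Y;
  J_scale : forall (f : A) X, J (f *: X) = f *: J X }.

Definition g_symmetric (g : V -> V -> A) (J : V -> V) : Prop :=
  forall X Y, g (J X) Y = g X (J Y).

Definition poly_structure (J : V -> V) (p q : R) : Prop :=
  forall X, J (J X) = p%:A *: J X + q%:A *: X.

Definition rsc (c : R) (X : V) : V := c%:A *: X.

Definition disc (p q : R) : R := p ^+ 2 + 4 * q.
Definition sigma_p (p q : R) : R := (p + Num.sqrt (disc p q)) / 2.
Definition sigma_m (p q : R) : R := (p - Num.sqrt (disc p q)) / 2.

Definition projP (J : V -> V) (p q : R) (X : V) : V :=
  rsc (Num.sqrt (disc p q))^-1 (- J X + rsc (sigma_p p q) X).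
Definition projP' (J : V -> V) (p q : R) (X : V) : V :=
  rsc (Num.sqrt (disc p q))^-1 (J X - rsc (sigma_m p q) X).

(* distributions, represented by their spaces of sections *)
Definition distD (J : V -> V) (p q : R) : V -> Prop := fun X => projP' J p q X = 0.
Definition distD' (J : V -> V) (p q : R) : V -> Prop := fun X => projP J p q X = 0.

Definition geodesically_invariant (D : V -> V -> V) (E : V -> Prop) : Prop :=
  forall X Y, E X -> E Y -> E (D X Y + D Y X).

Definition schouten (J : V -> V) (p q : R) (nabla : V -> V -> V) (X Y : V) : V :=
  projP J p q (nabla X (projP J p q Y)) + projP' J p q (nabla X (projP' J p q Y)).

Definition vranceanu (br : V -> V -> V) (J : V -> V) (p q : R)
    (nabla : V -> V -> V) (X Y : V) : V :=
  schouten J p q nabla (projP J p q X) Y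
  + projP J p q (br (projP' J p q X) (projP J p q Y))
  + projP' J p q (br (projP J p q X) (projP' J p q Y)).

Definition covJ (nabla : V -> V -> V) (J : V -> V) (X Y : V) : V :=
  nabla X (J Y) - J (nabla X Y).

Definition vidal (J : V -> V) (p q : R) (nablag : V -> V -> V) (X Y : V) : V :=
  nablag X Y + rsc (disc p q)^-1
    (rsc 2 (J (covJ nablag J X Y)) - rsc p (covJ nablag J X Y)
     + J (covJ nablag J Y X) + covJ nablag J (J Y) X - rsc p (covJ nablag J Y X)).

End Geo.

(* J has the distinct eigenvalues sigma_- and sigma_+, and P, P' are its spectral
   projectors onto the eigenspaces D and D'.  In the Schouten-van Kampen and
   Vranceanu connections every term that could leave D contains P' applied to a
   section of D, hence vanishes, and what remains lies in the image of P; dually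
   for D'.  For the Vidal connection and sections X, Y of an eigenspace with
   eigenvalue l, (nabla_X J) Y = (l - J) nabla_X Y, the terms in nabla_Y X are
   killed by the characteristic polynomial of J, and what remains is the
   spectral projector onto that eigenspace applied to nabla_X Y. *)
From HB Require Import structures.
From mathcomp Require Import all_boot all_order all_algebra.
From mathcomp Require Import reals.
From mathcomp Require Import ring.
Import Order.TTheory GRing.Theory Num.Theory.
Set Implicit Arguments. Unset Strict Implicit.
Local Open Scope ring_scope.

Lemma additive_map0 (U W : zmodType) (f : U -> W) :
  {morph f : x y / x + y} -> f 0 = 0.
Proof. by move=> fD; apply: (@addrI _ (f 0)); rewrite -fD !addr0. Qed.

Lemma geodesically_invariantW (R : realType) (A : comAlgType R) (V : lmodType A)
    (D : V -> V -> V) (E : V -> Prop) :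
  (forall X Y, E X -> E Y -> E (X + Y)) ->
  (forall X Y, E X -> E Y -> E (D X Y)) ->
  geodesically_invariant D E.
Proof. by move=> E_add E_D X Y EX EY; apply: E_add; apply: E_D. Qed.

Section RealScaling.
Variables (R : realType) (A : comAlgType R) (V : lmodType A).

Lemma rscDl (a b : R) (X : V) : rsc (a + b) X = rsc a X + rsc b X.
Proof. by rewrite /rsc scalerDl scalerDl. Qed.

Lemma rscDr (a : R) (X Y : V) : rsc a (X + Y) = rsc a X + rsc a Y.
Proof. exact: scalerDr. Qed.

Lemma rscA (a b : R) (X : V) : rsc a (rsc b X) = rsc (a * b) X.
Proof. by rewrite /rsc scalerA mulr_algl scalerA. Qed.

Lemma rscNl (a : R) (X : V) : rsc (- a) X = - rsc a X.
Proof. by rewrite /rsc scaleNr scaleNr. Qed.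

Lemma rscrN (a : R) (X : V) : rsc a (- X) = - rsc a X.
Proof. exact: scalerN. Qed.

Lemma rsc1 (X : V) : rsc 1 X = X.
Proof. by rewrite /rsc scale1r scale1r. Qed.

Lemma rscr0 (a : R) : rsc a (0 : V) = 0.
Proof. exact: scaler0. Qed.

Lemma rsc_eq0 (a : R) (X : V) : a != 0 -> rsc a X = 0 -> X = 0.
Proof. by move=> a_neq0 aX0; rewrite -[X]rsc1 -(mulVf a_neq0) -rscA aX0 rscr0. Qed.

End RealScaling.

Section SpectralProjectors.
Variables (R : realType) (A : comAlgType R) (V : lmodType A).
Variables (J : V -> V) (p q : R).
Hypotheses (HJ : tensor11 J) (HP : poly_structure J p q).

(* The operator a + b J.  As J^2 = p J + q, these operators are closed under
   composition with J, so every computation below reduces to an identity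
   between two pairs of real coefficients. *)
Definition polyJ (a b : R) (X : V) : V := rsc a X + rsc b (J X).

Lemma polyJ10 (X : V) : polyJ 1 0 X = X.
Proof. by rewrite /polyJ rsc1 /rsc scale0r scale0r addr0. Qed.

Lemma polyJ00 (X : V) : polyJ 0 0 X = 0.
Proof. by rewrite /polyJ /rsc !scale0r addr0. Qed.

Lemma polyJ_add (a b c d : R) (X : V) :
  polyJ a b X + polyJ c d X = polyJ (a + c) (b + d) X.
Proof. by rewrite /polyJ !rscDl addrACA. Qed.

Lemma polyJ_opp (a b : R) (X : V) : - polyJ a b X = polyJ (- a) (- b) X.
Proof. by rewrite /polyJ !rscNl opprD. Qed.

Lemma rsc_polyJ (k a b : R) (X : V) :
  rsc k (polyJ a b X) = polyJ (k * a) (k * b) X.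
Proof. by rewrite /polyJ rscDr !rscA. Qed.

Lemma J_rsc (a : R) (X : V) : J (rsc a X) = rsc a (J X).
Proof. exact: (J_scale HJ). Qed.

Lemma J_polyJ (a b : R) (X : V) : J (polyJ a b X) = polyJ (b * q) (a + b * p) X.
Proof.
have JJ : J (J X) = rsc p (J X) + rsc q X := HP X.
by rewrite /polyJ (J_add HJ) !J_rsc JJ rscDr !rscA rscDl addrA addrC.
Qed.

Hypothesis disc_gt0 : 0 < disc p q.

Let s := Num.sqrt (disc p q).

Lemma sqrt_disc_neq0 : s != 0.
Proof. by rewrite sqrtr_eq0 -ltNge. Qed.

Lemma q_sqrt_disc : q = (s ^+ 2 - p ^+ 2) / 4.
Proof. by rewrite sqr_sqrtr ?ltW // /disc; field. Qed.

Lemma sigma_pE : sigma_p p q = (p + s) / 2. Proof. by []. Qed.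
Lemma sigma_mE : sigma_m p q = (p - s) / 2. Proof. by []. Qed.

Lemma projP_polyJ (X : V) : projP J p q X = polyJ (sigma_p p q / s) (- s^-1) X.
Proof.
rewrite /projP -/s /polyJ rscDr rscA rscrN -rscNl addrC.
by rewrite [_ * sigma_p p q]mulrC.
Qed.

Lemma projP'_polyJ (X : V) : projP' J p q X = polyJ (- (sigma_m p q / s)) s^-1 X.
Proof.
rewrite /projP' -/s /polyJ rscDr rscrN rscA -rscNl addrC.
by rewrite [_ * sigma_m p q]mulrC.
Qed.

Lemma J_projP (X : V) : J (projP J p q X) = rsc (sigma_m p q) (projP J p q X).
Proof.
have s_neq0 := sqrt_disc_neq0.
rewrite projP_polyJ J_polyJ rsc_polyJ sigma_pE sigma_mE q_sqrt_disc.
by congr polyJ; field.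
Qed.

Lemma J_projP' (X : V) : J (projP' J p q X) = rsc (sigma_p p q) (projP' J p q X).
Proof.
have s_neq0 := sqrt_disc_neq0.
rewrite projP'_polyJ J_polyJ rsc_polyJ sigma_pE sigma_mE q_sqrt_disc.
by congr polyJ; field.
Qed.

Lemma projP_distD (X : V) : distD J p q (projP J p q X).
Proof. by rewrite /distD /projP' J_projP subrr rscr0. Qed.

Lemma projP'_distD' (X : V) : distD' J p q (projP' J p q X).
Proof. by rewrite /distD' /projP J_projP' addNr rscr0. Qed.

Lemma distD_eigen (X : V) : distD J p q X -> J X = rsc (sigma_m p q) X.
Proof.
by move/(rsc_eq0 (invr_neq0 sqrt_disc_neq0))/eqP; rewrite subr_eq0 => /eqP.
Qed.

Lemma distD'_eigen (X : V) : distD' J p q X -> J X = rsc (sigma_p p q) X.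
Proof.
by move/(rsc_eq0 (invr_neq0 sqrt_disc_neq0))/eqP; rewrite addrC subr_eq0 => /eqP.
Qed.

Lemma projPD : {morph projP J p q : X Y / X + Y}.
Proof.
by move=> X Y; rewrite /projP -rscDr; congr rsc; rewrite (J_add HJ) rscDr opprD addrACA.
Qed.

Lemma projP'D : {morph projP' J p q : X Y / X + Y}.
Proof.
by move=> X Y; rewrite /projP' -rscDr; congr rsc; rewrite (J_add HJ) rscDr opprD addrACA.
Qed.

Lemma projP0 : projP J p q 0 = 0. Proof. exact: additive_map0 projPD. Qed.
Lemma projP'0 : projP' J p q 0 = 0. Proof. exact: additive_map0 projP'D. Qed.

Lemma distD_add (X Y : V) : distD J p q X -> distD J p q Y -> distD J p q (X + Y).
Proof. by rewrite /distD projP'D => -> ->; rewrite addr0. Qed.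

Lemma distD'_add (X Y : V) : distD' J p q X -> distD' J p q Y -> distD' J p q (X + Y).
Proof. by rewrite /distD' projPD => -> ->; rewrite addr0. Qed.

Lemma sigma_m_root : q = sigma_m p q ^+ 2 - p * sigma_m p q.
Proof. by rewrite sigma_mE {1}q_sqrt_disc; field. Qed.

Lemma sigma_p_root : q = sigma_p p q ^+ 2 - p * sigma_p p q.
Proof. by rewrite sigma_pE {1}q_sqrt_disc; field. Qed.

Lemma sigma_m_gap : 2 * sigma_m p q - p = - s.
Proof. by rewrite sigma_mE; field. Qed.

Lemma sigma_p_gap : 2 * sigma_p p q - p = s.
Proof. by rewrite sigma_pE; field. Qed.

Variables (der : V -> A -> A) (br : V -> V -> V) (nabla : V -> V -> V).
Hypotheses (Hvf : vector_field_structure der br) (Hn : linear_connection der nabla).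

Lemma nabla_X0 (X : V) : nabla X 0 = 0.
Proof. exact: additive_map0 (nabla_addY Hn X). Qed.

Lemma br_0l (Y : V) : br 0 Y = 0.
Proof. exact: additive_map0 (fun X X' => br_addl Hvf X X' Y). Qed.

Lemma br_0r (X : V) : br X 0 = 0.
Proof. by rewrite (br_anti Hvf) br_0l oppr0. Qed.

Lemma schouten_distD (X Y : V) :
  distD J p q Y -> distD J p q (schouten J p q nabla X Y).
Proof.
by rewrite /schouten /distD => ->; rewrite nabla_X0 projP'0 addr0; apply: projP_distD.
Qed.

Lemma schouten_distD' (X Y : V) :
  distD' J p q Y -> distD' J p q (schouten J p q nabla X Y).
Proof.
by rewrite /schouten /distD' => ->; rewrite nabla_X0 projP0 add0r; apply: projP'_distD'.
Qed.

Lemma vranceanu_distD (X Y : V) :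
  distD J p q X -> distD J p q Y -> distD J p q (vranceanu br J p q nabla X Y).
Proof.
move=> DX DY; rewrite /vranceanu DX DY br_0l br_0r projP0 projP'0 !addr0.
exact: schouten_distD.
Qed.

Lemma vranceanu_distD' (X Y : V) :
  distD' J p q X -> distD' J p q Y -> distD' J p q (vranceanu br J p q nabla X Y).
Proof.
move=> D'X D'Y; rewrite /vranceanu D'X D'Y br_0l br_0r projP0 projP'0 !addr0.
exact: schouten_distD'.
Qed.

Lemma nabla_rsc (X Y : V) (l : R) : nabla X (rsc l Y) = rsc l (nabla X Y).
Proof. by rewrite /rsc (nabla_leibniz Hn) (der_const Hvf) scale0r addr0. Qed.

Lemma covJ_rscl (l : R) (X Y : V) : covJ nabla J (rsc l X) Y = rsc l (covJ nabla J X Y).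
Proof. by rewrite /covJ /rsc !(nabla_scaleX Hn) (J_scale HJ) scalerBr. Qed.

Lemma covJ_eigen (l : R) (X Y : V) :
  J Y = rsc l Y -> covJ nabla J X Y = polyJ l (-1) (nabla X Y).
Proof. by rewrite /covJ => ->; rewrite nabla_rsc /polyJ rscNl rsc1. Qed.

Lemma vidal_eigen (l : R) (X Y : V) :
    q = l ^+ 2 - p * l -> 2 * l - p != 0 -> J X = rsc l X -> J Y = rsc l Y ->
  vidal J p q nabla X Y = polyJ ((l - p) / (2 * l - p)) (2 * l - p)^-1 (nabla X Y).
Proof.
move=> hq hl JX JY.
have char_poly_kills W :
    J (polyJ l (-1) W) + (rsc l (polyJ l (-1) W) - rsc p (polyJ l (-1) W)) = 0.
  rewrite J_polyJ !rsc_polyJ polyJ_opp !polyJ_add hq.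
  by apply: etrans (polyJ00 W); congr polyJ; ring.
have disc_sqr : disc p q = (2 * l - p) ^+ 2 by rewrite /disc hq; ring.
rewrite /vidal JY covJ_rscl (covJ_eigen X JY) (covJ_eigen Y JX) -!addrA.
rewrite char_poly_kills addr0 J_polyJ !rsc_polyJ polyJ_opp polyJ_add rsc_polyJ.
rewrite -{1}(polyJ10 (nabla X Y)) polyJ_add disc_sqr hq.
by congr polyJ; field.
Qed.

Lemma vidal_distD (X Y : V) :
  distD J p q X -> distD J p q Y -> vidal J p q nabla X Y = projP J p q (nabla X Y).
Proof.
move=> /distD_eigen JX /distD_eigen JY.
have s_neq0 := sqrt_disc_neq0.
have gap_neq0 : 2 * sigma_m p q - p != 0 by rewrite sigma_m_gap oppr_eq0.
rewrite (vidal_eigen sigma_m_root gap_neq0 JX JY) sigma_m_gap projP_polyJ.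
rewrite sigma_pE sigma_mE.
by congr polyJ; field.
Qed.

Lemma vidal_distD' (X Y : V) :
  distD' J p q X -> distD' J p q Y -> vidal J p q nabla X Y = projP' J p q (nabla X Y).
Proof.
move=> /distD'_eigen JX /distD'_eigen JY.
have s_neq0 := sqrt_disc_neq0.
have gap_neq0 : 2 * sigma_p p q - p != 0 by rewrite sigma_p_gap.
rewrite (vidal_eigen sigma_p_root gap_neq0 JX JY) sigma_p_gap projP'_polyJ.
rewrite sigma_pE sigma_mE.
by congr polyJ; field.
Qed.

End SpectralProjectors.

Theorem mainTheorem6 (R : realType) (A : comAlgType R) (V : lmodType A)
  (der : V -> A -> A) (br : V -> V -> V) (g : V -> V -> A)
  (nablag : V -> V -> V) (J : V -> V) (p q : R) (nabla : V -> V -> V) :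
  vector_field_structure der br ->
  pseudo_metric g ->
  levi_civita der br g nablag ->
  tensor11 J ->
  g_symmetric g J ->
  poly_structure J p q ->
  0 < disc p q ->
  linear_connection der nabla ->
  (geodesically_invariant (schouten J p q nabla) (distD J p q) /\
   geodesically_invariant (schouten J p q nabla) (distD' J p q)) /\
  (geodesically_invariant (vranceanu br J p q nabla) (distD J p q) /\
   geodesically_invariant (vranceanu br J p q nabla) (distD' J p q)) /\
  (geodesically_invariant (vidal J p q nablag) (distD J p q) /\
   geodesically_invariant (vidal J p q nablag) (distD' J p q)).
Proof.
move=> Hvf _ Hlc HJ _ HP disc_gt0 Hn.
have Hg := lc_conn Hlc.
split; [split | split; [split | split]].
- apply: (geodesically_invariantW (distD_add HJ)) => X Y _.
  exact: (schouten_distD HJ HP disc_gt0 Hn).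
- apply: (geodesically_invariantW (distD'_add HJ)) => X Y _.
  exact: (schouten_distD' HJ HP disc_gt0 Hn).
- apply: (geodesically_invariantW (distD_add HJ)) => X Y.
  exact: (vranceanu_distD HJ HP disc_gt0 Hvf Hn).
- apply: (geodesically_invariantW (distD'_add HJ)) => X Y.
  exact: (vranceanu_distD' HJ HP disc_gt0 Hvf Hn).
- apply: (geodesically_invariantW (distD_add HJ)) => X Y DX DY.
  rewrite (vidal_distD HJ HP disc_gt0 Hvf Hg DX DY); exact: projP_distD.
- apply: (geodesically_invariantW (distD'_add HJ)) => X Y D'X D'Y.
  rewrite (vidal_distD' HJ HP disc_gt0 Hvf Hg D'X D'Y); exact: projP'_distD'.
Qed.
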